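(* Let $k\geq 2$ and $n\geq 1$ be integers and let $G\in\mathcal{G}_{k,n}$. Then $G$ contains $H_k$ as a subgraph (i.e., there is an injective map $\sigma:V(H_k)\to V(G)$ sending every edge of $H_k$ to an edge of $G$) if and only if there exist $i_{\mathrm{top}},i_{\mathrm{bot}}\in[n]$ such that both $\{f_{\mathrm{top},a,i_{\mathrm{top}}},\,f_{\mathrm{bot},a,i_{\mathrm{bot}}}\}\in E(G)$ and $\{f_{\mathrm{top},b,i_{\mathrm{top}}},\,f_{\mathrm{bot},b,i_{\mathrm{bot}}}\}\in E(G)$.
   Context: Sides $S\in\{\mathrm{top},\mathrm{bot}\}$, orientations $X\in\{a,b,\mathrm{mid}\}$. Define $c(\mathrm{top},a)=6$, $c(\mathrm{top},b)=7$, $c(\mathrm{bot},a)=8$, $c(\mathrm{bot},b)=9$, and $c(S,\mathrm{mid})=10$ for both $S$. The graph $H_k$: vertices are (i) four endpoints $e_{S,P}$ for $S\in\{\mathrm{top},\mathrm{bot}\}$, $P\in\{a,b\}$; (ii) for each $s\in\{6,\dots,10\}$ a set $K_s$ of $s$ vertices forming an $s$-clique, with a distinguished vertex $\kappa_s\in K_s$; (iii) triangle vertices $t_{S,i,X}$ for $S\in\{\mathrm{top},\mathrm{bot}\}$, $i\in[k]$, $X\in\{a,b,\mathrm{mid}\}$. Edges: all edges inside each $K_s$; for each $S,i$ the three vertices $t_{S,i,a},t_{S,i,b},t_{S,i,\mathrm{mid}}$ form a triangle; $\{e_{\mathrm{top},P},e_{\mathrm{bot},P}\}$ for each $P\in\{a,b\}$;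 $\{e_{S,P},\kappa_{c(S,P)}\}$ for all $S,P$; $\{t_{S,i,X},\kappa_{c(S,X)}\}$ for all $S,i,X$; $\{\kappa_s,\kappa_{s'}\}$ for all distinct $s,s'\in\{6,\dots,10\}$; and $\{e_{S,P},t_{S,i,P}\}$ for all $S$, $P\in\{a,b\}$, $i\in[k]$. No other edges. The family $\mathcal{G}_{k,n}$: let $m=k\lceil n^{1/k}\rceil$ and fix an ordering $Q_1,\dots,Q_N$ of the $k$-element subsets of $[m]$ (note $N=\binom{m}{k}\ge n$). A graph $G$ is in $\mathcal{G}_{k,n}$ if its vertices are: endpoint copies $f_{S,P,i}$ for $S\in\{\mathrm{top},\mathrm{bot}\}$, $P\in\{a,b\}$, $i\in[n]$; triangle vertices $u_{S,j,X}$ for $S\in\{\mathrm{top},\mathrm{bot}\}$, $j\in[m]$, $X\in\{a,b,\mathrm{mid}\}$; and for each $s\in\{6,\dots,10\}$ a set $K'_s$ of $s$ vertices with a distinguished vertex $\kappa'_s\in K'_s$; and its edges are exactly: all edges inside each $K'_s$; for each $S,j$ the triangle on $u_{S,j,a},u_{S,j,b},u_{S,j,\mathrm{mid}}$; $\{f_{S,P,i},\kappa'_{c(S,P)}\}$ for all $S,P,i$; $\{u_{S,j,X},\kappa'_{c(S,X)}\}$ for all $S,j,X$; $\{\kappa'_s,\kappa'_{s'}\}$ for all distinct $s,s'$; $\{f_{S,P,i},u_{S,j,P}\}$ for all $S$, $P\in\{a,b\}$, $i\in[n]$ and $j\in Q_i$; and, for each $P\in\{a,b\}$, an arbitrary subset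 of the pairs $\{f_{\mathrm{top},P,i},f_{\mathrm{bot},P,i'}\}$, $i,i'\in[n]$. *)

From mathcomp Require Import all_boot.
Set Implicit Arguments. Unset Strict Implicit. Unset Printing Implicit Defensive.

Inductive side := Top | Bot.
Inductive pab := PA | PB.
Inductive orient := Oa | Ob | Omid.
Definition ori (P : pab) : orient := match P with PA => Oa | PB => Ob end.

Inductive cl := C6 | C7 | C8 | C9 | C10.
Definition csize (c : cl) : nat :=
  match c with C6 => 6 | C7 => 7 | C8 => 8 | C9 => 9 | C10 => 10 end.

Definition cc (S : side) (X : orient) : cl :=
  match S, X with
  | Top, Oa => C6 | Top, Ob => C7 | Bot, Oa => C8 | Bot, Ob => C9
  | _, Omid => C10 end.

(* Vertices: endpoints e_{S,P}; clique vertices (c, j) with j < |K_c|, the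
   distinguished vertex kappa_c being the one with j = 0; triangle vertices
   t_{S,i,X} with i in [k] (0-based). *)
Inductive VH (k : nat) :=
  | HE of side & pab
  | HK (c : cl) of 'I_(csize c)
  | HT of side & 'I_k & orient.

Inductive genH (k : nat) : VH k -> VH k -> Prop :=
  | gH_clique c (j j' : 'I_(csize c)) : j <> j' -> genH (HK k j) (HK k j')
  | gH_tri S i X Y : X <> Y -> genH (HT S i X) (HT S i Y)
  | gH_ends P : genH (HE k Top P) (HE k Bot P)
  | gH_end_kappa S P (j : 'I_(csize (cc S (ori P)))) :
      nat_of_ord j = 0 -> genH (HE k S P) (HK k j)
  | gH_tri_kappa S i X (j : 'I_(csize (cc S X))) :
      nat_of_ord j = 0 -> genH (HT S i X) (HK k j)
  | gH_kappa c c' (j : 'I_(csize c)) (j' : 'I_(csize c')) :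
      c <> c' -> nat_of_ord j = 0 -> nat_of_ord j' = 0 -> genH (HK k j) (HK k j')
  | gH_end_tri S P i : genH (HE k S P) (HT S i (ori P)).

Definition adjH (k : nat) (x y : VH k) : Prop := genH x y \/ genH y x.

(* ceil(n^(1/k)) = least r with n <= r^k (valid for k >= 1; r = n always works). *)
Definition ceil_root (k n : nat) : nat := find (fun r => n <= r ^ k) (iota 0 n.+1).
Definition mpar (k n : nat) : nat := k * ceil_root k n.

(* Vertices of a graph in G_{k,n}: f_{S,P,i} (i in [n]); clique vertices;
   u_{S,j,X} (j in [m]).  Indices are 0-based. *)
Inductive VG (n m : nat) :=
  | GF of side & pab & 'I_n
  | GK (c : cl) of 'I_(csize c)
  | GU of side & 'I_m & orient.

(* Qs : the fixed ordering Q_1,...,Q_N of the k-subsets of [m] (as a list);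
   Q_i = nth set0 Qs i.  ext P i i' says whether the pair
   {f_{top,P,i}, f_{bot,P,i'}} is chosen as an edge. *)
Inductive genG (n m : nat) (Qs : seq {set 'I_m}) (ext : pab -> 'I_n -> 'I_n -> bool)
  : VG n m -> VG n m -> Prop :=
  | gG_clique c (j j' : 'I_(csize c)) : j <> j' -> genG Qs ext (GK n m j) (GK n m j')
  | gG_tri S j X Y : X <> Y -> genG Qs ext (GU n S j X) (GU n S j Y)
  | gG_f_kappa S P i (j : 'I_(csize (cc S (ori P)))) :
      nat_of_ord j = 0 -> genG Qs ext (GF m S P i) (GK n m j)
  | gG_u_kappa S j X (j0 : 'I_(csize (cc S X))) :
      nat_of_ord j0 = 0 -> genG Qs ext (GU n S j X) (GK n m j0)
  | gG_kappa c c' (j : 'I_(csize c)) (j' : 'I_(csize c')) :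
      c <> c' -> nat_of_ord j = 0 -> nat_of_ord j' = 0 ->
      genG Qs ext (GK n m j) (GK n m j')
  | gG_f_u S P (i : 'I_n) (j : 'I_m) :
      j \in nth set0 Qs i -> genG Qs ext (GF m S P i) (GU n S j (ori P))
  | gG_ext P i i' : ext P i i' -> genG Qs ext (GF m Top P i) (GF m Bot P i').

Definition adjG (n m : nat) (Qs : seq {set 'I_m}) (ext : pab -> 'I_n -> 'I_n -> bool)
  (x y : VG n m) : Prop := genG Qs ext x y \/ genG Qs ext y x.

Definition contains_subgraph (VH0 VG0 : Type) (adjH0 : VH0 -> VH0 -> Prop)
  (adjG0 : VG0 -> VG0 -> Prop) : Prop :=
  exists sigma : VH0 -> VG0, injective sigma /\
    forall x y, adjH0 x y -> adjG0 (sigma x) (sigma y).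

From HB Require Import structures.
From mathcomp Require Import all_boot.
Set Implicit Arguments. Unset Strict Implicit. Unset Printing Implicit Defensive.

(* Apart from the non-distinguished vertices of the cliques
   K'_s, the vertices of G can be properly coloured with five colours, so every
   clique of G with at least six vertices contains such an inner vertex, and all
   neighbours of an inner vertex lie in its own clique.  Hence an embedding sigma
   of H_k maps each K_s into a single K'_s'; as the cliques have pairwise
   distinct sizes, a counting argument shows that sigma maps K_s onto K'_s and
   kappa_s to kappa'_s.  Every other vertex of H_k is then pinned down by its
   kappa-neighbour: triangle (S,i) goes to a triangle u_{S,h(i),*} with h
   injective, and e_{S,a}, e_{S,b} go to f_{S,a,g}, f_{S,b,g'} with h([k])
   contained in Q_g and in Q_g'.  The Q's being distinct k-sets, g = g', and the
   edges e_{top,P} e_{bot,P} of H_k give the required edges of G.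
   Backward direction: send e_{S,P} to f_{S,P,i_S} and the k triangles of side
   S onto the triangles indexed by Q_{i_S}, which exists since
   N = C(k r, k) >= r^k >= n for r = ceil(n^(1/k)); the middle inequality
   counts the graphs of the maps [k] -> [r] among the k-subsets of [k] x [r]. *)


Lemma inj_leq_weight_eq (T : finType) (w : T -> nat) (f : T -> T) :
  injective f -> (forall x, w x <= w (f x)) -> forall x, w (f x) = w x.
Proof.
move=> f_inj le_w.
have [_] := leqif_sum (fun i (_ : predT i) => leqif_eq (le_w i)).
rewrite {1}(reindex_inj f_inj) eqxx => /esym/forall_inP all_eq x.
by apply/esym/eqP/all_eq.
Qed.

Lemma inj_block_fixed (T : finType) (I : eqType) (b : T -> I) (f : T -> T) :
    injective f -> (forall x y, b x = b y -> b (f x) = b (f y)) ->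
    (forall x y, #|[set z | b z == b x]| = #|[set z | b z == b y]| -> b x = b y) ->
  forall x, b (f x) = b x.
Proof.
move=> f_inj f_blocks block_sizes x; apply: block_sizes.
have le_blocks y : #|[set z | b z == b y]| <= #|[set z | b z == b (f y)]|.
  rewrite -(card_imset _ f_inj); apply/subset_leq_card/subsetP => _ /imsetP[z zy ->].
  by move: zy; rewrite !inE => /eqP/f_blocks ->.
exact: inj_leq_weight_eq f_inj le_blocks x.
Qed.

Lemma expn_le_bin k r : r ^ k <= 'C(k * r, k).
Proof.
pose graph (f : {ffun 'I_k -> 'I_r}) := [set (i, f i) | i : 'I_k].
have graph_inj : injective graph.
  move=> f g /setP E; apply/ffunP => i.
  by have /imsetP[_ _ [<- ->]] : (i, f i) \in graph g by rewrite -E imset_f.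
have card_graph f : #|graph f| = k by rewrite card_imset ?card_ord // => i j [].
have -> : r ^ k = #|{: {ffun 'I_k -> 'I_r}}| by rewrite card_ffun !card_ord.
have -> : 'C(k * r, k) = #|[set A : {set 'I_k * 'I_r} | #|A| == k]|.
  by rewrite card_draws card_prod !card_ord.
rewrite -(card_imset _ graph_inj); apply/subset_leq_card/subsetP => _ /imsetP[f _ ->].
by rewrite inE card_graph.
Qed.

Lemma leq_ceil_root k n : 0 < k -> n <= ceil_root k n ^ k.
Proof.
move=> k_gt0; have has_root : has (fun r => n <= r ^ k) (iota 0 n.+1).
  apply/hasP; exists n; first by rewrite mem_iota leq0n add0n ltnSn.
  by case: n => // n; rewrite -{1}(expn1 n.+1); apply: leq_pexp2l.
have := nth_find 0 has_root; rewrite nth_iota ?add0n //.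
by move: has_root; rewrite has_find size_iota.
Qed.

Lemma size_ksets (T : finType) (Qs : seq {set T}) k :
  uniq Qs -> (forall A, (A \in Qs) = (#|A| == k)) -> size Qs = 'C(#|T|, k).
Proof.
move=> Qs_uniq memQs; rewrite -card_draws -(card_uniqP Qs_uniq).
by apply: eq_card => A; rewrite inE memQs.
Qed.

Lemma ksets_index_unique (T : finType) (Qs : seq {set T}) k (A : {set T}) g g' :
    uniq Qs -> (forall B, B \in Qs -> #|B| = k) -> #|A| = k -> 0 < k ->
    A \subset nth set0 Qs g -> A \subset nth set0 Qs g' -> g = g'.
Proof.
move=> Qs_uniq Qs_card cardA k_gt0.
have nthE g0 : A \subset nth set0 Qs g0 -> g0 < size Qs /\ nth set0 Qs g0 = A.
  move=> subA; have lt_g0 : g0 < size Qs.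
    rewrite ltnNge; apply: contraTN subA => /(nth_default set0) ->.
    by rewrite subset0 -cards_eq0 cardA -lt0n.
  split=> //; apply/esym/eqP.
  by rewrite eqEcard subA (Qs_card _ (mem_nth set0 lt_g0)) cardA leqnn.
move=> /nthE[lt_g Eg] /nthE[lt_g' Eg'].
by apply/eqP; rewrite -(nth_uniq set0 lt_g lt_g' Qs_uniq) Eg Eg'.
Qed.

Lemma card_inj_ord (T : finType) (A : {set T}) k :
  #|A| = k -> exists2 f : 'I_k -> T, injective f & forall i, f i \in A.
Proof. by move=> <-; exists enum_val; [apply: enum_val_inj | apply: enum_valP]. Qed.

Definition ord_of_cl (c : cl) : 'I_5 :=
  match c with
  | C6 => @Ordinal 5 0 isT | C7 => @Ordinal 5 1 isT | C8 => @Ordinal 5 2 isT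
  | C9 => @Ordinal 5 3 isT | C10 => @Ordinal 5 4 isT
  end.

Definition cl_of_ord (i : 'I_5) : cl :=
  match val i with 0 => C6 | 1 => C7 | 2 => C8 | 3 => C9 | _ => C10 end.

Lemma ord_of_clK : cancel ord_of_cl cl_of_ord.
Proof. by case. Qed.

HB.instance Definition _ := Finite.copy cl (can_type ord_of_clK).

Lemma card_cl_lt_csize c : #|{: cl}| < csize c.
Proof.
apply: (@leq_ltn_trans 5); last by case: c.
by rewrite -[5]card_ord; apply: leq_card (can_inj ord_of_clK).
Qed.

Lemma csize_inj : injective csize.
Proof. by case; case. Qed.

Lemma csize_gt0 c : 0 < csize c.
Proof. by case: c. Qed.

Definition kappa (c : cl) : 'I_(csize c) := Ordinal (csize_gt0 c).

Lemma cc_ori_inj s o s' p : cc s o = cc s' (ori p) -> s = s' /\ o = ori p.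
Proof. by case: s; case: o; case: s'; case: p. Qed.

Lemma cc_mid s o s' : cc s o = cc s' Omid -> o = Omid.
Proof. by case: s; case: o; case: s'. Qed.

Lemma ori_inj : injective ori.
Proof. by case; case. Qed.

Lemma ori_neq_mid p : ori p <> Omid.
Proof. by case: p. Qed.

Notation cvertex := {c : cl & 'I_(csize c)}.

Lemma card_tag_block c : #|[set x : cvertex | tag x == c]| = csize c.
Proof.
pose tag_c (j : 'I_(csize c)) : cvertex := Tagged _ j.
have tag_c_inj : injective tag_c by move=> j j' /eqP; rewrite eq_Tagged => /eqP.
suff -> : [set x : cvertex | tag x == c] = tag_c @: [set: 'I_(csize c)].
  by rewrite card_imset // cardsT card_ord.
apply/setP => -[c' j]; rewrite !inE; apply/eqP/imsetP => [/= ec|[j' _ ->] //].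
by subst c'; exists j; rewrite ?inE.
Qed.

Definition HKt k (x : cvertex) : VH k := HK k (tagged x).

Lemma HKt_inj k : injective (HKt k).
Proof.
pose cvertexH (x : VH k) : option cvertex := if x is HK _ j then Some (Tagged _ j) else None.
by apply: (pcan_inj (g := cvertexH)); case.
Qed.

Section GraphG.

Variables (n m : nat) (Qs : seq {set 'I_m}) (ext : pab -> 'I_n -> 'I_n -> bool).
Local Notation adj := (adjG Qs ext).

Definition GKt (x : cvertex) : VG n m := GK n m (tagged x).

Definition cvertex_of (y : VG n m) : option cvertex :=
  if y is GK _ j then Some (Tagged _ j) else None.

(* [genG] by cases, used in place of inversion, which would need [eq_rect_eq]
   for the dependently typed clique indices. *)
Definition edgeG (y z : VG n m) : Prop :=
  match y, z with
  | GK c j, GK c' j' =>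
      (c = c' /\ j <> j' :> nat) \/ [/\ c <> c', j = 0 :> nat & j' = 0 :> nat]
  | GU s j o, GU s' j' o' => [/\ s = s', j = j' & o <> o']
  | GF s p _, GK c j => c = cc s (ori p) /\ j = 0 :> nat
  | GU s _ o, GK c j => c = cc s o /\ j = 0 :> nat
  | GF s p i, GU s' j o => [/\ s = s', o = ori p & j \in nth set0 Qs i]
  | GF s p i, GF s' p' i' => [/\ s = Top, s' = Bot, p = p' & ext p i i']
  | _, _ => False
  end.

Lemma genG_edgeG y z : genG Qs ext y z -> edgeG y z.
Proof.
by case=> //= [c j j' ne_jj'|c c' j j' *]; [left; split=> // /val_inj | right].
Qed.

Lemma adjG_edgeG y z : adj y z -> edgeG y z \/ edgeG z y.
Proof. by case=> /genG_edgeG; [left | right]. Qed.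

Lemma adjG_sym y z : adj y z -> adj z y.
Proof. by case; [right | left]. Qed.

Definition clique_of (y : VG n m) : option cl := if y is GK c _ then Some c else None.

Definition inner (y : VG n m) : bool := if y is GK _ j then 0 < j else false.

Lemma inner_adjG y z : inner y -> adj y z -> clique_of z = clique_of y.
Proof.
case: y => // c j /= j_gt0 /adjG_edgeG.
case: z => [s p i|c' j'|s j' o] /=; try by case=> [|[_ j0]] //; rewrite j0 in j_gt0.
case.
- by case=> [[ec _]|[_ j0 _]]; [rewrite ec | rewrite j0 in j_gt0].
- by case=> [[ec _]|[_ _ j0]]; [rewrite ec | rewrite j0 in j_gt0].
Qed.

Definition colour (y : VG n m) : cl :=
  match y with
  | GK c _ => c
  | GF Top PA _ => C8 | GF Top PB _ => C6 | GF Bot PA _ => C6 | GF Bot PB _ => C7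
  | GU Top _ Oa => C7 | GU Top _ Ob => C8 | GU Top _ Omid => C6
  | GU Bot _ Oa => C9 | GU Bot _ Ob => C10 | GU Bot _ Omid => C8
  end.

Lemma colour_edgeG y z : ~~ inner y -> ~~ inner z -> edgeG y z -> colour y != colour z.
Proof.
case: y => [s p i|c j|s j o]; case: z => [s' p' i'|c' j'|s' j' o'] //=.
- by move=> _ _ [-> -> <- _]; case: p.
- by move=> _ _ [ec _]; rewrite {}ec; case: s; case: p.
- by move=> _ _ [<- -> _]; case: s; case: p.
- rewrite -!leqNgt !leqn0 => /eqP j0 /eqP j'0.
  by case=> [[_ []]|[/eqP]] //; rewrite j0 j'0.
- by move=> _ _ [ec _]; rewrite {}ec; case: s; case: o.
- by move=> _ _ [<- _]; case: s; case: o; case: o'.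
Qed.

Lemma colour_adjG y z : ~~ inner y -> ~~ inner z -> adj y z -> colour y != colour z.
Proof.
move=> y_out z_out /adjG_edgeG[/colour_edgeG-> //|/colour_edgeG].
by rewrite eq_sym; apply.
Qed.

Lemma clique_has_inner (T : finType) (f : T -> VG n m) :
  #|{: cl}| < #|T| -> (forall i j, i != j -> adj (f i) (f j)) -> exists i, inner (f i).
Proof.
move=> lt_cl f_clique; apply/existsP; apply: contraLR lt_cl.
rewrite negb_exists -leqNgt => /forallP f_out.
apply: (@leq_card _ _ (colour \o f)) => i j /= /eqP; apply: contraTeq => ne_ij.
exact: colour_adjG (f_out i) (f_out j) (f_clique i j ne_ij).
Qed.

Definition anchor (y : VG n m) : option cl :=
  match y with
  | GF s p _ => Some (cc s (ori p))
  | GK _ _ => None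
  | GU s _ o => Some (cc s o)
  end.

Lemma kappa_adjG_anchor c y :
  clique_of y = None -> adj y (GK n m (kappa c)) -> anchor y = Some c.
Proof. by case: y => // [s p i|s j o] _ /adjG_edgeG /= [[->]|]. Qed.

Lemma GU_adjG_nonclique s j o y : clique_of y = None -> adj y (GU n s j o) ->
  (exists2 o', o' <> o & y = GU n s j o') \/
  (exists p (i : 'I_n), [/\ ori p = o, j \in nth set0 Qs i & y = GF m s p i]).
Proof.
case: y => [s' p i|//|s' j' o'] _ /adjG_edgeG /= [] //.
- by case=> -> -> jQ; right; exists p, i.
- by case=> -> -> ne; left; exists o'.
- by case=> -> -> ne; left; exists o' => // eo; apply: ne.
Qed.

End GraphG.

Section Embedding.

Variables (k n m : nat) (Qs : seq {set 'I_m}) (ext : pab -> 'I_n -> 'I_n -> bool).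
Local Notation adj := (adjG Qs ext).
Local Notation HKt := (HKt k).
Local Notation GKt := (GKt n m).

Variable sigma : VH k -> VG n m.
Hypothesis sigma_inj : injective sigma.
Hypothesis sigma_hom : forall x y, adjH x y -> adj (sigma x) (sigma y).

Let sigma_gen x y : genH x y -> adj (sigma x) (sigma y).
Proof. by move=> xy; apply: sigma_hom; left. Qed.

Lemma sigma_clique c : exists c', forall j : 'I_(csize c), clique_of (sigma (HK k j)) = Some c'.
Proof.
have [j0 inner_j0] : exists j0 : 'I_(csize c), inner (sigma (HK k j0)).
  apply: (clique_has_inner (Qs := Qs) (ext := ext)); first by rewrite card_ord card_cl_lt_csize.
  by move=> j j' /eqP ne_jj'; apply/sigma_gen/gH_clique.
have [c' Ec'] : exists c', clique_of (sigma (HK k j0)) = Some c'.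
  by case: (sigma _) inner_j0 => // c' j _; exists c'.
exists c' => j; have [<- //|ne_j0j] := eqVneq j0 j.
by rewrite -Ec'; apply: inner_adjG inner_j0 _; apply/sigma_gen/gH_clique/eqP.
Qed.

(* The permutation of clique vertices induced by sigma; the default [x] is
   never used, see [sigma_HKt]. *)
Definition csigma (x : cvertex) : cvertex := odflt x (cvertex_of (sigma (HKt x))).

Lemma sigma_HKt x : sigma (HKt x) = GKt (csigma x).
Proof.
case: x => c j; have [c' /(_ j)] := sigma_clique c.
by rewrite /csigma /HKt /=; case: (sigma _).
Qed.

Lemma csigma_inj : injective csigma.
Proof. by move=> x y e; apply/HKt_inj/sigma_inj; rewrite !sigma_HKt e. Qed.

Lemma clique_of_sigma x : clique_of (sigma (HKt x)) = Some (tag (csigma x)).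
Proof. by rewrite sigma_HKt. Qed.

Lemma tag_csigma x : tag (csigma x) = tag x.
Proof.
apply: inj_block_fixed csigma_inj _ _ x => [[c j] [c' j'] /= ec|x' y'].
  subst c'; have [c' Ec'] := sigma_clique c.
  have := clique_of_sigma (existT _ c j); have := clique_of_sigma (existT _ c j').
  by rewrite /= !Ec' => -[<-] [<-].
by rewrite !card_tag_block => /csize_inj.
Qed.

Lemma sigma_kappa c : sigma (HK k (kappa c)) = GK n m (kappa c).
Proof.
have [c' ne_cc'] : exists c', c <> c' by exists (if c is C6 then C7 else C6); case: c.
have := sigma_HKt (existT _ c (kappa c)); have := tag_csigma (existT _ c (kappa c)).
case: (csigma _) => c'' j /= ec; subst c''; rewrite /HKt /GKt /= => Ekappa.
rewrite Ekappa; congr (GK n m _).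
apply/val_inj/eqP => /=; rewrite -leqn0 leqNgt; apply/negP => j_inner.
have kappa_adj : adj (GK n m j) (sigma (HK k (kappa c'))).
  by rewrite -Ekappa; apply/sigma_gen/gH_kappa.
have := clique_of_sigma (existT _ c' (kappa c')); rewrite /HKt tag_csigma /=.
by rewrite (inner_adjG (y := GK n m j) j_inner kappa_adj) => -[/ne_cc'].
Qed.

Lemma sigma_nonclique x : (forall y, x <> HKt y) -> clique_of (sigma x) = None.
Proof.
move=> x_out; case Ex: (sigma x) => [|c j|] //.
have [csigma_inv _ csigma_invK] := injF_bij csigma_inj.
case: (x_out (csigma_inv (existT _ c j))); apply: sigma_inj.
by rewrite sigma_HKt csigma_invK Ex.
Qed.

Lemma anchor_sigma x c :
  (forall y, x <> HKt y) -> genH x (HK k (kappa c)) -> anchor (sigma x) = Some c.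
Proof.
move=> x_out x_kappa; apply: kappa_adjG_anchor (sigma_nonclique x_out) _.
by rewrite -sigma_kappa; apply: sigma_gen.
Qed.

Lemma sigma_triangle s i : exists j, forall p, sigma (HT s i (ori p)) = GU n s j (ori p).
Proof.
have : anchor (sigma (HT s i Omid)) = Some (cc s Omid) by apply: anchor_sigma => //; constructor.
case Emid: (sigma _) => [s' p' i'|//|s' j o] /= [ecc]; first by case: (ori_neq_mid (cc_mid ecc)).
move/cc_mid: ecc Emid => -> Emid; exists j => p.
have adj_mid : adj (sigma (HT s i (ori p))) (GU n s' j Omid).
  by rewrite -Emid; apply/sigma_gen/gH_tri/ori_neq_mid.
have : anchor (sigma (HT s i (ori p))) = Some (cc s (ori p)) by apply: anchor_sigma => //; constructor.
case: (GU_adjG_nonclique (sigma_nonclique _) adj_mid) => // [[o' _ ->]|[p' [_ [ori_mid _ _]]]].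
  by case=> /cc_ori_inj[-> ->].
by case: (ori_neq_mid ori_mid).
Qed.

Lemma sigma_endpoint s p i j : sigma (HT s i (ori p)) = GU n s j (ori p) ->
  exists2 g, sigma (HE k s p) = GF m s p g & j \in nth set0 Qs g.
Proof.
move=> Et; have adj_t : adj (sigma (HE k s p)) (GU n s j (ori p)).
  by rewrite -Et; apply/sigma_gen/gH_end_tri.
have : anchor (sigma (HE k s p)) = Some (cc s (ori p)) by apply: anchor_sigma => //; constructor.
case: (GU_adjG_nonclique (sigma_nonclique _) adj_t) => // [[o ne_o ->]|[p' [g [/ori_inj-> jQ ->]]]].
  by case=> /cc_ori_inj[_ /ne_o].
by exists g.
Qed.

Hypotheses (k_gt0 : 0 < k) (Qs_uniq : uniq Qs) (Qs_card : forall A, A \in Qs -> #|A| = k).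

Lemma sigma_endpoint_index s :
  exists g, sigma (HE k s PA) = GF m s PA g /\ sigma (HE k s PB) = GF m s PB g.
Proof.
have [h Eh] := fin_all_exists (sigma_triangle s).
have h_inj : injective h.
  by move=> i i' hii'; have := Eh i PA; rewrite hii' -(Eh i' PA) => /sigma_inj[].
have index p : exists2 g, sigma (HE k s p) = GF m s p g & h @: setT \subset nth set0 Qs g.
  have [g Eg _] := sigma_endpoint (Eh (Ordinal k_gt0) p).
  exists g => //; apply/subsetP => _ /imsetP[i _ ->].
  by have [g' Eg'] := sigma_endpoint (Eh i p); move: Eg'; rewrite Eg => -[->].
have [gA EA subA] := index PA; have [gB EB subB] := index PB.
exists gA; rewrite EA EB; split=> //; congr (GF m s PB _); apply/val_inj/esym.
apply: (ksets_index_unique Qs_uniq Qs_card _ k_gt0 subA subB).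
by rewrite card_imset // cardsT card_ord.
Qed.

Lemma embedding_ext_edges : exists itop ibot : 'I_n,
  adj (GF m Top PA itop) (GF m Bot PA ibot) /\ adj (GF m Top PB itop) (GF m Bot PB ibot).
Proof.
have [gT [ETA ETB]] := sigma_endpoint_index Top.
have [gB [EBA EBB]] := sigma_endpoint_index Bot.
by exists gT, gB; rewrite -ETA -EBA -ETB -EBB; split; apply/sigma_gen/gH_ends.
Qed.

End Embedding.

Lemma contains_of_ext_edges k n m (Qs : seq {set 'I_m}) ext (itop ibot : 'I_n) :
    (forall i : 'I_n, #|nth set0 Qs i| = k) ->
    adjG Qs ext (GF m Top PA itop) (GF m Bot PA ibot) ->
    adjG Qs ext (GF m Top PB itop) (GF m Bot PB ibot) ->
  contains_subgraph (@adjH k) (adjG Qs ext).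
Proof.
move=> Qs_card edgeA edgeB.
pose idx s := if s is Top then itop else ibot.
have [qT qT_inj qT_in] := card_inj_ord (Qs_card itop).
have [qB qB_inj qB_in] := card_inj_ord (Qs_card ibot).
pose q s := if s is Top then qT else qB.
have q_inj s : injective (q s) by case: s.
have q_in s i : q s i \in nth set0 Qs (idx s) by case: s.
pose sigma (x : VH k) : VG n m :=
  match x with
  | HE s p => GF m s p (idx s)
  | HK _ j => GK n m j
  | HT s i o => GU n s (q s i) o
  end.
have sigma_gen x y : genH x y -> adjG Qs ext (sigma x) (sigma y).
  case=> [c j j' ne|s i o o' ne|[]|s p j j0|s i o j j0|c c' j j' ne j0 j'0|s p i] //;
    by left; constructor.
exists sigma; split=> [x y|x y [/sigma_gen|/sigma_gen/adjG_sym] //].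
case: x y => [s p|c j|s i o] [s' p'|c' j'|s' i' o'] //=.
- by case=> -> ->.
- by move/(congr1 (@cvertex_of n m))/Some_inj/(congr1 (HKt k)).
- by case=> <- /q_inj -> ->.
Qed.

Theorem lemma1 (k n : nat) (hk : 2 <= k) (hn : 1 <= n)
  (Qs : seq {set 'I_(mpar k n)})
  (hQuniq : uniq Qs)
  (hQall : forall A : {set 'I_(mpar k n)}, (A \in Qs) = (#|A| == k))
  (ext : pab -> 'I_n -> 'I_n -> bool) :
  contains_subgraph (@adjH k) (adjG Qs ext) <->
  exists itop ibot : 'I_n,
    adjG Qs ext (GF (mpar k n) Top PA itop) (GF (mpar k n) Bot PA ibot) /\
    adjG Qs ext (GF (mpar k n) Top PB itop) (GF (mpar k n) Bot PB ibot).
Proof.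
have k_gt0 : 0 < k by apply: ltnW.
have Qs_card A : A \in Qs -> #|A| = k by rewrite hQall => /eqP.
split=> [[sigma [sigma_inj sigma_hom]]|[itop [ibot [edgeA edgeB]]]].
  exact: embedding_ext_edges sigma_inj sigma_hom k_gt0 hQuniq Qs_card.
apply: contains_of_ext_edges edgeA edgeB => i; apply/Qs_card/mem_nth.
rewrite (leq_trans (ltn_ord i)) // (size_ksets hQuniq hQall) card_ord.
exact: leq_trans (leq_ceil_root n k_gt0) (expn_le_bin _ _).
Qed.
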